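(* Let a project have finite state space $\mathbb{X}$, transition probabilities $p(i,j)$, active rewards $R(i)$, discount factor $0<\beta\le1$ and horizon $T$. For a tuple $A=(A_1,\dots,A_T)$ of subsets of $\mathbb{X}$ and $1\le d\le T$, $i\in\mathbb{X}$, let $f_d^A(i)$ be the expected total discounted reward $\mathsf{E}_i[\sum_{t=0}^{\tau-1}\beta^tR(X(t))]$ earned starting in state $i$ with $d$ remaining periods under the stopping rule $\tau$ that, at time $t<d$ (when $d-t$ periods remain) engages the project iff $X(t)\in A_{d-t}$, and stops at the first time this fails or when $t=d$; and let $r_d^A(i)=f_d^{A\cup\{(d,i)\}}(i)$, where $A\cup\{(s,j)\}$ denotes the tuple obtained from $A$ by replacing $A_s$ with $A_s\cup\{j\}$. Let $A$ satisfy $A_1\subseteq A_2\subseteq\dots\subseteq A_T\subseteq\mathbb{X}$. Then for $1\le d\le T$ and $i\in\mathbb{X}$: (a) $r_d^A(i)=R(i)+\beta\sum_{j\in A_{d-1}}p(i,j)r_{d-1}^A(j)$ if $2\le d\le T$, and $r_1^A(i)=R(i)$. (b) $r_d^{A\cup\{(d,i^* )\}}(i)=r_d^A(i)$ for $i^*\in\mathbb{X}\setminus A_d$. (c) $r_d^{A\cup\{(d-1,i^* )\}}(i)=r_d^A(i)+\beta p(i,i^* )r_{d-1}^A(i^* )$ for $i^*\in A_d\setminus A_{d-1}$ (with $d\ge 2$). (d) $r_d^{A\cup\{(s,i^* )\}}(i)=R(i)+\beta\sum_{j\in A_{d-1}}p(i,j)r_{d-1}^{A\cup\{(s,i^* )\}}(j)$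 for $1\le s\le d-2$ and $i^*\in A_{s+1}\setminus A_s$.
   Context: $r_d^A(i)$ is the modified reward measure: the reward measure of the stopping rule with continuation sets $A$, modified so that the project is engaged at least at time 0 in state $i$ with $d$ periods remaining. *)

From HB Require Import structures.
From mathcomp Require Import all_boot all_order all_algebra.
Set Implicit Arguments. Unset Strict Implicit. Unset Printing Implicit Defensive.
Import Order.TTheory GRing.Theory Num.Theory.
Local Open Scope ring_scope.

Section Project.
Variables (R : realFieldType) (X : finType).
Variables (p : X -> X -> R) (rew : X -> R) (beta : R).

(* A tuple of continuation sets (A_1, ..., A_T) is a map nat -> {set X};
   only the indices 1..T are ever consulted. *)
Definition tupleA := nat -> {set X}.

Definition updA (A : tupleA) (s : nat) (j : X) : tupleA :=
  fun k => if k == s then A k :|: [set j] else A k.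

Definition traj (d : nat) := {ffun 'I_d.+1 -> X}.

Definition traj_prob (d : nat) (x : traj d) : R :=
  \prod_(t < d) p (x (inord t)) (x (inord t.+1)).

Definition stop_time (A : tupleA) (d : nat) (x : traj d) : nat :=
  find (fun t => x (inord t) \notin A (d - t)%N) (iota 0 d).

Definition disc_reward (A : tupleA) (d : nat) (x : traj d) : R :=
  \sum_(t < d | (t < stop_time A x)%N) beta ^+ t * rew (x (inord t)).

Definition fval (A : tupleA) (d : nat) (i : X) : R :=
  \sum_(x : traj d | x ord0 == i) traj_prob x * disc_reward A x.

Definition rval (A : tupleA) (d : nat) (i : X) : R :=
  fval (updA A d i) d i.

End Project.

From mathcomp Require Import all_boot all_order all_algebra.
From mathcomp Require Import ring zify.
Import Order.TTheory GRing.Theory Num.Theory.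
Local Open Scope ring_scope.

(* A trajectory of d+1 periods from i is i followed by a trajectory of d
   periods, and both the stopping time and the discounted reward split along
   this decomposition. This gives the dynamic-programming recursion
     f_{d+1}^A(i) = [i \in A_{d+1}] (R(i) + beta sum_j p(i,j) f_d^A(j)),
   so f_d^A depends only on A_1, ..., A_d and r_d^A only on A_1, ..., A_{d-1};
   all four parts are read off from these facts. *)

Set Implicit Arguments. Unset Strict Implicit.

Section Trajectories.
Variable X : finType.

Definition traj_cons d (j : X) (y : traj X d) : traj X d.+1 :=
  [ffun k : 'I_d.+2 => if val k is k'.+1 then y (inord k') else j].

Definition traj_behead d (x : traj X d.+1) : traj X d :=
  [ffun k : 'I_d.+1 => x (inord k.+1)].

Lemma traj_cons0 d j (y : traj X d) : traj_cons j y ord0 = j.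
Proof. by rewrite ffunE. Qed.

Lemma traj_cons_inord0 d j (y : traj X d) : traj_cons j y (inord 0) = j.
Proof. by rewrite ffunE /= inordK. Qed.

Lemma traj_consS d j (y : traj X d) t :
  (t <= d)%N -> traj_cons j y (inord t.+1) = y (inord t).
Proof. by move=> ht; rewrite ffunE /= inordK. Qed.

Lemma traj_cons_bij d : bijective (fun u : X * traj X d => traj_cons u.1 u.2).
Proof.
exists (fun x : traj X d.+1 => (x ord0, traj_behead x)).
  case=> j y /=; rewrite traj_cons0; congr pair; apply/ffunP=> -[k hk].
  by rewrite !ffunE /= inordK ?ltnS //; congr (y _); apply: val_inj; rewrite /= inordK.
move=> x; apply/ffunP=> -[[|k] hk]; rewrite ffunE /=.
  by congr (x _); apply: val_inj.
by rewrite ffunE inordK //; congr (x _); apply: val_inj; rewrite /= inordK.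
Qed.

Lemma stop_time_cons (A : tupleA X) d i (y : traj X d) :
  stop_time A (traj_cons i y) = if i \in A d.+1 then (stop_time A y).+1 else 0%N.
Proof.
rewrite /stop_time /= traj_cons_inord0 subn0; case: (i \in A d.+1) => //=.
congr S; rewrite -(addn0 1%N) iotaDl find_map.
apply: eq_in_find => t; rewrite mem_iota add0n /= => ht.
by rewrite add1n traj_consS ?subSS // ltnW.
Qed.

Variable R : realFieldType.

Lemma big_traj_head d i (G : traj X d.+1 -> R) :
  \sum_(x : traj X d.+1 | x ord0 == i) G x = \sum_(y : traj X d) G (traj_cons i y).
Proof.
rewrite (reindex _ (onW_bij _ (traj_cons_bij d))).
rewrite (eq_bigl (fun u => (u.1 == i) && true)) => [|u]; last first.
  by rewrite traj_cons0 andbT.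
rewrite -(pair_big_dep (pred1 i) (fun _ _ => true) (fun j y => G (traj_cons j y))) /=.
by rewrite big_pred1_eq.
Qed.

Lemma big_traj0 i (G : traj X 0 -> R) :
  \sum_(x : traj X 0 | x ord0 == i) G x = G [ffun=> i].
Proof.
rewrite (big_pred1 [ffun=> i]) // => x /=.
apply/eqP/eqP => [<-|->]; last by rewrite ffunE.
by apply/ffunP=> k; rewrite ffunE (ord1 k).
Qed.

Lemma big_traj_partition_head d (g : X -> R) (F : traj X d -> R) :
  \sum_(y : traj X d) g (y ord0) * F y =
  \sum_j g j * \sum_(y : traj X d | y ord0 == j) F y.
Proof.
rewrite (partition_big (fun y : traj X d => y ord0) predT) //=.
by apply: eq_bigr => j _; rewrite mulr_sumr; apply: eq_bigr => y /eqP <-.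
Qed.

End Trajectories.

Section Recursion.
Variables (R : realFieldType) (X : finType).
Variables (p : X -> X -> R) (rew : X -> R) (beta : R).

Local Notation f := (fval p rew beta).
Local Notation r := (rval p rew beta).

Lemma traj_prob_cons d j (y : traj X d) :
  traj_prob p (traj_cons j y) = p j (y ord0) * traj_prob p y.
Proof.
rewrite /traj_prob big_ord_recl traj_cons_inord0 traj_consS //; congr (_ * _).
  by congr (p _ (y _)); apply: val_inj; rewrite /= inordK.
by apply: eq_bigr => -[t ht] _; rewrite /= /bump /= add1n !traj_consS // ltnW.
Qed.

Lemma disc_reward_cons (A : tupleA X) d i (y : traj X d) :
  disc_reward rew beta A (traj_cons i y) =
  if i \in A d.+1 then rew i + beta * disc_reward rew beta A y else 0.
Proof.
rewrite /disc_reward stop_time_cons; case: ifP => _; last first.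
  by rewrite big1 // => t; rewrite ltn0.
rewrite big_mkcond big_ord_recl /= expr0 mul1r traj_cons_inord0; congr (_ + _).
rewrite [in RHS]big_mkcond mulr_sumr; apply: eq_bigr => -[t ht] _ /=.
rewrite /bump /= add1n ltnS; case: ifP => _; last by rewrite mulr0.
by rewrite exprS -mulrA traj_consS // ltnW.
Qed.

Lemma fval0 (A : tupleA X) i : f A 0%N i = 0.
Proof. by rewrite /fval big1 // => y _; rewrite /disc_reward big_ord0 mulr0. Qed.

Hypothesis p_stochastic : forall i, \sum_j p i j = 1.

Lemma sum_traj_prob d i : \sum_(y : traj X d | y ord0 == i) traj_prob p y = 1.
Proof.
elim: d i => [|d IHd] i; first by rewrite big_traj0 /traj_prob big_ord0.
rewrite big_traj_head; under eq_bigr do rewrite traj_prob_cons.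
by rewrite big_traj_partition_head; under eq_bigr do rewrite IHd mulr1.
Qed.

Lemma fvalS (A : tupleA X) d i :
  f A d.+1 i = if i \in A d.+1 then rew i + beta * \sum_j p i j * f A d j else 0.
Proof.
rewrite /fval big_traj_head.
under eq_bigr do rewrite traj_prob_cons disc_reward_cons.
case: ifP => _; last by rewrite big1 // => y _; rewrite mulr0.
under eq_bigr do rewrite mulrDr.
rewrite big_split /= -mulr_suml.
have -> : \sum_(y : traj X d) p i (y ord0) * traj_prob p y = 1.
  rewrite big_traj_partition_head -[RHS](p_stochastic i).
  by apply: eq_bigr => j _; rewrite sum_traj_prob mulr1.
rewrite mul1r; congr (_ + _).
under eq_bigr do rewrite mulrCA -mulrA.
by rewrite -mulr_sumr big_traj_partition_head.
Qed.

Lemma eq_fval (A B : tupleA X) d i :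
  (forall k, (1 <= k <= d)%N -> A k = B k) -> f A d i = f B d i.
Proof.
elim: d i => [|d IHd] i eqAB; first by rewrite !fval0.
rewrite !fvalS eqAB ?leqnn //; case: ifP => // _.
congr (_ + _ * _); apply: eq_bigr => j _; congr (_ * _).
by apply: IHd => k /andP[k_gt0 k_le]; rewrite eqAB // k_gt0 leqW.
Qed.

Lemma rvalE (A : tupleA X) d i : (0 < d)%N ->
  r A d i = rew i + beta * \sum_j p i j * f A d.-1 j.
Proof.
case: d => // d _; rewrite /rval fvalS /updA eqxx in_setU set11 orbT /=.
congr (_ + _ * _); apply: eq_bigr => j _; congr (_ * _).
by apply: eq_fval => k /andP[_ k_le]; rewrite ifN // neq_ltn ltnS k_le.
Qed.

Lemma fval_rval (A : tupleA X) d j : (0 < d)%N ->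
  f A d j = if j \in A d then r A d j else 0.
Proof. by case: d => // d _; rewrite fvalS rvalE. Qed.

Lemma rval1 (A : tupleA X) i : r A 1%N i = rew i.
Proof.
rewrite rvalE // big1 ?mulr0 ?addr0 // => j _.
by rewrite fval0 mulr0.
Qed.

Lemma rvalS (A : tupleA X) d i : (1 < d)%N ->
  r A d i = rew i + beta * \sum_(j in A d.-1) p i j * r A d.-1 j.
Proof.
move=> d_gt1; rewrite rvalE; last exact: ltnW.
congr (_ + _ * _).
rewrite [RHS]big_mkcond; apply: eq_bigr => j _.
rewrite fval_rval; last by rewrite -subn1 subn_gt0.
by case: ifP; rewrite ?mulr0.
Qed.

Lemma eq_rval (A B : tupleA X) d i :
  (forall k, (1 <= k < d)%N -> A k = B k) -> r A d i = r B d i.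
Proof.
case: d => [|d] eqAB; first by rewrite /rval !fval0.
rewrite !rvalE //; congr (_ + _ * _); apply: eq_bigr => j _; congr (_ * _).
exact: eq_fval.
Qed.

Lemma updA_eq (A : tupleA X) s j k : k != s -> updA A s j k = A k.
Proof. by rewrite /updA => /negbTE ->. Qed.

Lemma rval_updA_ge (A : tupleA X) s d j i :
  (d <= s)%N -> r (updA A s j) d i = r A d i.
Proof.
move=> le_ds; apply: eq_rval => k /andP[_ lt_kd].
by rewrite updA_eq // neq_ltn (leq_trans lt_kd).
Qed.

(* Only the index set A_{d-1} of the sum in [rvalS] changes: the values
   r_{d-1} depend on A_1, ..., A_{d-2} alone. *)
Lemma rval_updA_pred (A : tupleA X) d j i : (1 < d)%N -> j \notin A d.-1 ->
  r (updA A d.-1 j) d i = r A d i + beta * p i j * r A d.-1 j.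
Proof.
move=> d_gt1 jA; rewrite [LHS]rvalS // [r A d i]rvalS //.
have updA_pred : updA A d.-1 j d.-1 = j |: A d.-1 by rewrite /updA eqxx setUC.
rewrite updA_pred big_setU1 //= rval_updA_ge //.
rewrite (eq_bigr (fun k => p i k * r A d.-1 k)) => [|k _]; first by ring.
by rewrite rval_updA_ge.
Qed.

End Recursion.

Theorem lemma1 (R : realFieldType) (X : finType)
  (p : X -> X -> R) (rew : X -> R) (beta : R) (T : nat) (A : tupleA X)
  (hp0 : forall i j, 0 <= p i j)
  (hp1 : forall i, \sum_(j : X) p i j = 1)
  (hbeta : 0 < beta <= 1)
  (hmono : forall k, (1 <= k < T)%N -> A k \subset A k.+1) :
  forall (d : nat) (i : X), (1 <= d <= T)%N ->
  (* (a) *)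
  ((2 <= d)%N ->
     rval p rew beta A d i =
     rew i + beta * \sum_(j in A d.-1) p i j * rval p rew beta A d.-1 j) /\
  rval p rew beta A 1 i = rew i /\
  (* (b) *)
  (forall istar, istar \notin A d ->
     rval p rew beta (updA A d istar) d i = rval p rew beta A d i) /\
  (* (c) *)
  (forall istar, (2 <= d)%N -> istar \in A d :\: A d.-1 ->
     rval p rew beta (updA A d.-1 istar) d i =
     rval p rew beta A d i + beta * p i istar * rval p rew beta A d.-1 istar) /\
  (* (d) *)
  (forall s istar, (1 <= s <= d - 2)%N -> istar \in A s.+1 :\: A s ->
     rval p rew beta (updA A s istar) d i =
     rew i + beta * \sum_(j in A d.-1) p i j *
                      rval p rew beta (updA A s istar) d.-1 j).
Proof.
move=> d i _; split; first exact: (rvalS rew beta hp1).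
split; first exact: (rval1 rew beta hp1).
split; first by move=> istar _; apply: (rval_updA_ge rew beta hp1).
split.
  move=> istar d_gt1; rewrite inE => /andP[istar_notin _].
  exact: (rval_updA_pred rew beta hp1 _ d_gt1 istar_notin).
move=> s istar /andP[s_gt0 s_le] _.
rewrite (rvalS rew beta hp1); last by lia.
by rewrite updA_eq //; lia.
Qed.
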